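(* Let $n\ge1$ and let $\mathbf F$ be any family of subsets of $[n]$. Identify vertices of $Q_n$ with subsets of $[n]$. Let $G(\mathbf F)$ be the subgraph of $Q_n$ induced by $\mathbf X(\mathbf F)$ and $G'(\mathbf F)$ the subgraph induced by its complement $2^{[n]}\setminus \mathbf X(\mathbf F)$. Then $\Delta(G(\mathbf F))\le \max\{r(\mathbf F),t(\mathbf F)\}$ and $\Delta(G'(\mathbf F))\le\max\{r(\mathbf F),t(\mathbf F)\}$.
   Context: $[n]=\{1,\dots,n\}$; a subset $T\subseteq[n]$ is identified with the vertex $x\in\{0,1\}^n$ having $x_i=1$ iff $i\in T$, so two subsets are adjacent in $Q_n$ iff their symmetric difference has exactly one element. $\mathbf X(\mathbf F)=\{S\subseteq[n]: |S| \text{ even and } F\subseteq S \text{ for some } F\in\mathbf F\}\cup\{S\subseteq[n]: |S|\text{ odd and } F\not\subseteq S\text{ for all }F\in\mathbf F\}$. The rank $r(\mathbf F)$ is the largest cardinality of a member of $\mathbf F$. $t(\mathbf F)$ is the largest $t$ for which there exist $F_1,\dots,F_t\in\mathbf F$ and elements $x_1,\dots,x_t$ with $x_i\in F_j$ iff $i=j$ (for all $1\le i,j\le t$). $\Delta$ denotes maximum degree. *)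

From mathcomp Require Import all_boot.
Set Implicit Arguments. Unset Strict Implicit. Unset Printing Implicit Defensive.

Definition qadj (n : nat) (S T : {set 'I_n}) : bool :=
  #|(S :\: T) :|: (T :\: S)| == 1.

Definition Xset (n : nat) (F : {set {set 'I_n}}) : {set {set 'I_n}} :=
  [set S : {set 'I_n} |
     (~~ odd #|S| && [exists A in F, A \subset S])
  || (odd #|S| && [forall A in F, ~~ (A \subset S)])].

Definition ideg (n : nat) (V : {set {set 'I_n}}) (S : {set 'I_n}) : nat :=
  #|[set T in V | qadj S T]|.

Definition maxdeg (n : nat) (V : {set {set 'I_n}}) : nat :=
  \max_(S in V) ideg V S.

Definition rankF (n : nat) (F : {set {set 'I_n}}) : nat :=
  \max_(A in F) #|A|.

Definition has_t (n : nat) (F : {set {set 'I_n}}) (t : nat) : bool :=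
  [exists Fs : {ffun 'I_t -> {set 'I_n}}, exists xs : {ffun 'I_t -> 'I_n},
     [forall i, Fs i \in F] &&
     [forall i, forall j, (xs i \in Fs j) == (i == j)]].

(* t(F): the largest such t.  Any such t satisfies t <= n (the x_i are
   pairwise distinct elements of [n]), so maximizing over t < n.+2 gives
   the true maximum. *)
Definition tF (n : nat) (F : {set {set 'I_n}}) : nat :=
  \max_(t < n.+2 | has_t F t) t.

From mathcomp Require Import all_boot.
Set Implicit Arguments. Unset Strict Implicit. Unset Printing Implicit Defensive.

(* Both X(F) and its complement are "parity classes": membership of S depends
   only on odd |S| xor (S contains a member of F).  Adjacent vertices have
   opposite parities, so two adjacent vertices of one class differ in whether
   they contain a member of F.  If S contains some A in F, its neighbours in
   the class are S minus a point of A, so there are at most |A| <= r(F) of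
   them.  Otherwise they are S plus a point x, and a member of F inside S + x
   must contain x; these members and points form a system witnessing t(F). *)

Definition contains_member n (F : {set {set 'I_n}}) (S : {set 'I_n}) : bool :=
  [exists A in F, A \subset S].

Lemma qadjP n (S T : {set 'I_n}) : qadj S T ->
  exists x, (x \in S /\ T = S :\ x) \/ (x \notin S /\ T = x |: S).
Proof.
rewrite /qadj => /cards1P[x /setP symdx].
have inT y : (y \in T) = (y \in S) (+) (y == x).
  by have := symdx y; rewrite !inE; case: (y \in S); case: (y \in T) => /= <-.
exists x; case xS: (x \in S); [left | right]; split=> //;
  apply/setP=> y; rewrite !inE inT; case: eqVneq => [->|]; rewrite ?xS ?addbF //=.
Qed.

Lemma odd_card_qadj n (S T : {set 'I_n}) : qadj S T -> odd #|T| = ~~ odd #|S|.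
Proof.
case/qadjP=> x [[xS ->] | [xS ->]]; last by rewrite cardsU1 xS.
by rewrite [#|S|](cardsD1 x) xS negbK.
Qed.

Lemma mem_of_subset_setU1 n (F : {set {set 'I_n}}) (S A : {set 'I_n}) x :
  ~~ contains_member F S -> A \in F -> A \subset x |: S -> x \in A.
Proof.
move=> notS AF AxS; apply: contraR notS => xA; apply/existsP; exists A.
rewrite AF; apply/subsetP=> y yA.
by case/setU1P: (subsetP AxS y yA) => // yx; rewrite -yx yA in xA.
Qed.

Lemma ideg_le_card n (V : {set {set 'I_n}}) (S : {set 'I_n}) (X : {set 'I_n})
    (f : 'I_n -> {set 'I_n}) :
  (forall T, T \in V -> qadj S T -> T \in f @: X) -> ideg V S <= #|X|.
Proof.
move=> nbhd; apply: leq_trans (leq_imset_card f X).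
by apply/subset_leq_card/subsetP => T; rewrite inE => /andP[/nbhd]; apply.
Qed.

Lemma card_le_rankF n (F : {set {set 'I_n}}) (A : {set 'I_n}) :
  A \in F -> #|A| <= rankF F.
Proof. exact: leq_bigmax_cond. Qed.

Lemma has_t_card n (F : {set {set 'I_n}}) (X : {set 'I_n}) :
  (forall x, x \in X -> exists2 A, A \in F & A :&: X = [set x]) ->
  has_t F #|X|.
Proof.
move=> isolating.
have /fin_all_exists[Fs FsP] (i : 'I_#|X|) :
    exists A, (A \in F) && (A :&: X == [set enum_val i]).
  by have [A AF AX] := isolating _ (enum_valP i); exists A; rewrite AF AX eqxx.
apply/existsP; exists [ffun i => Fs i]; apply/existsP; exists [ffun i => enum_val i].
apply/andP; split; apply/forallP=> i; first by rewrite ffunE; case/andP: (FsP i).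
apply/forallP=> j; rewrite !ffunE; case/andP: (FsP j) => _ /eqP FsjX.
have: enum_val i \in Fs j :&: X = (enum_val i \in Fs j) by rewrite inE enum_valP andbT.
by rewrite FsjX in_set1 (inj_eq enum_val_inj) => <-.
Qed.

Lemma has_t_card_le_tF n (F : {set {set 'I_n}}) (X : {set 'I_n}) :
  has_t F #|X| -> #|X| <= tF F.
Proof.
move=> htX; have ltX : #|X| < n.+2 by rewrite ltnS (leq_trans (max_card X)) ?card_ord.
exact: (leq_bigmax_cond (Ordinal ltX) htX).
Qed.

Section ParityClass.

Variables (n : nat) (F : {set {set 'I_n}}) (V : {set {set 'I_n}}) (b : bool).
Hypothesis inV : forall S, (S \in V) = (odd #|S| (+) contains_member F S == b).

Lemma contains_member_qadj S T : S \in V -> T \in V -> qadj S T ->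
  contains_member F T = ~~ contains_member F S.
Proof.
move=> + + /odd_card_qadj oddT; rewrite !inV oddT => /eqP <-.
by case: (odd _); case: (contains_member F S); case: (contains_member F T).
Qed.

Lemma ideg_le_rankF S A : S \in V -> A \in F -> A \subset S -> ideg V S <= rankF F.
Proof.
move=> SV AF AS; apply: leq_trans (card_le_rankF AF).
apply: (@ideg_le_card _ _ _ _ (fun x => S :\ x)) => T TV adj.
have notT : ~~ contains_member F T.
  by rewrite (contains_member_qadj SV TV adj) negbK; apply/existsP; exists A; rewrite AF.
have [x [[xS eT] | [xS eT]]] := qadjP adj; last first.
  by case/negP: notT; apply/existsP; exists A; rewrite AF eT subsetU ?AS ?orbT.
rewrite eT; apply: imset_f; apply: contraR notT => xA.
by apply/existsP; exists A; rewrite AF eT subsetD1 AS.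
Qed.

Lemma ideg_le_tF S : S \in V -> ~~ contains_member F S -> ideg V S <= tF F.
Proof.
move=> SV notS.
pose X := [set x | (x \notin S) && [exists A in F, A \subset x |: S]].
have isolating x : x \in X -> exists2 A, A \in F & A :&: X = [set x].
  rewrite /X inE => /andP[xS /existsP[A /andP[AF AxS]]].
  exists A => //; apply/setP=> y; rewrite !inE.
  case: (eqVneq y x) => [->|yx].
    by rewrite (mem_of_subset_setU1 notS AF AxS) xS; apply/existsP; exists A; rewrite AF.
  apply/negbTE/negP => /and3P[yA yS _].
  by case/setU1P: (subsetP AxS y yA) => [yx' | yS']; [rewrite yx' eqxx in yx | rewrite yS' in yS].
apply: leq_trans (has_t_card_le_tF (has_t_card isolating)).
apply: (@ideg_le_card _ _ _ _ (fun x => x |: S)) => T TV adj.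
have /existsP[A /andP[AF AT]] : contains_member F T.
  by rewrite (contains_member_qadj SV TV adj).
have [x [[xS eT] | [xS eT]]] := qadjP adj.
  by case/negP: notS; apply/existsP; exists A; rewrite AF (subset_trans AT) // eT subD1set.
by rewrite eT; apply: imset_f; rewrite /X inE xS; apply/existsP; exists A; rewrite AF -eT AT.
Qed.

Lemma maxdeg_parity_class : maxdeg V <= maxn (rankF F) (tF F).
Proof.
apply/bigmax_leqP => S SV; case: (boolP (contains_member F S)).
  by case/existsP=> A /andP[AF AS]; rewrite leq_max (ideg_le_rankF SV AF AS).
by move=> notS; rewrite leq_max (ideg_le_tF SV notS) orbT.
Qed.

End ParityClass.

Lemma in_Xset n (F : {set {set 'I_n}}) (S : {set 'I_n}) :
  (S \in Xset F) = odd #|S| (+) contains_member F S.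
Proof.
rewrite inE /contains_member -negb_exists_in.
by case: (odd _); case: [exists _ in _, _].
Qed.

Theorem lemma3p2 (n : nat) (F : {set {set 'I_n}}) : 1 <= n ->
  maxdeg (Xset F) <= maxn (rankF F) (tF F) /\
  maxdeg (~: Xset F) <= maxn (rankF F) (tF F).
Proof.
move=> _; split.
  by apply: (@maxdeg_parity_class _ _ _ true) => S; rewrite in_Xset eqb_id.
by apply: (@maxdeg_parity_class _ _ _ false) => S; rewrite inE in_Xset eqbF_neg.
Qed.
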